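(* Let $h$ be an isometry of the $E_8$ lattice of order $5$ which does not have $1$ as an eigenvalue. Then the lattice $(h-1)E_8$ is rootless.
   Context: $E_8$ is the $E_8$ root lattice; rootless means containing no vectors of norm $2$. *)

From HB Require Import structures.
From mathcomp Require Import all_boot all_order all_algebra.
Set Implicit Arguments. Unset Strict Implicit. Unset Printing Implicit Defensive.
Import Order.TTheory GRing.Theory Num.Theory.
Local Open Scope ring_scope.

(* The E8 root lattice, presented as Z^8 (row vectors of integer coordinates
   with respect to a basis of simple roots) together with the Gram matrix of
   that basis, i.e. the Cartan matrix of E8.  Dynkin diagram (0-based):
   0 - 1 - 2 - 3 - 4 - 5 - 6, with node 7 attached to node 4. *)
Definition E8_adj (i j : 'I_8) : bool :=
  ((i.+1 == j :> nat) && (j < 7)%N) || ((j.+1 == i :> nat) && (i < 7)%N)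
  || ((i == 4 :> nat) && (j == 7 :> nat)) || ((i == 7 :> nat) && (j == 4 :> nat)).

Definition E8_gram : 'M[int]_8 :=
  \matrix_(i, j) (if i == j then 2 else if E8_adj i j then -1 else 0).

Definition E8_form (u v : 'rV[int]_8) : int := (u *m E8_gram *m v^T) 0 0.
Definition E8_norm (v : 'rV[int]_8) : int := E8_form v v.

(* An isometry of E8: a Z-linear map v |-> v *m h of the lattice preserving
   the form.  (Such h is automatically invertible over Z, since
   det(h)^2 = 1.) *)
Definition E8_isometry (h : 'M[int]_8) : Prop :=
  forall u v : 'rV[int]_8, E8_form (u *m h) (v *m h) = E8_form u v.

Definition rootless (L : 'rV[int]_8 -> Prop) : Prop :=
  forall v, L v -> E8_norm v != 2.

Definition image_hm1 (h : 'M[int]_8) (v : 'rV[int]_8) : Prop :=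
  exists u : 'rV[int]_8, v = u *m (h - 1).

From HB Require Import structures.
From mathcomp Require Import all_boot all_order all_algebra.
From mathcomp Require Import ring lra zify.
Set Implicit Arguments. Unset Strict Implicit. Unset Printing Implicit Defensive.
Import Order.TTheory GRing.Theory Num.Theory.
Local Open Scope ring_scope.

(* An isometry [h] with [h^5 = 1] and no nonzero fixed vector acts on the
   lattice like a primitive fifth root of unity [z]: every orbit
   [w, wh, ..., wh^4] sums to zero.  This forces the norm identity
   [N(w(h-1)^2) + 5 N(w) = 5 N(w(h-1))], the analogue of
   [|1-z|^4 - 5|1-z|^2 + 5 = 0].  If [v = u(h-1)] had norm 2, then
   [N(v(h-1)) = 10 - 5 N(u) <= 0], because the nonzero vector [u] of the even
   positive definite lattice E8 has norm at least 2.  Hence [v(h-1) = 0], so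
   [v] is fixed by [h] and vanishes, which contradicts [N(v) = 2]. *)

Definition gram_form n (G : 'M[int]_n) (u v : 'rV[int]_n) : int :=
  (u *m G *m v^T) 0 0.

Section GramForm.
Variables (n : nat) (G : 'M[int]_n).
Local Notation form := (gram_form G).

Lemma gram_formDl u v w : form (u + v) w = form u w + form v w.
Proof. by rewrite /gram_form !mulmxDl mxE. Qed.

Lemma gram_formNl u w : form (- u) w = - form u w.
Proof. by rewrite /gram_form !mulNmx mxE. Qed.

Lemma gram_formDr u v w : form u (v + w) = form u v + form u w.
Proof. by rewrite /gram_form linearD mulmxDr mxE. Qed.

Lemma gram_formNr u w : form u (- w) = - form u w.
Proof. by rewrite /gram_form linearN mulmxN mxE. Qed.

Lemma gram_form0l w : form 0 w = 0.
Proof. by rewrite /gram_form !mul0mx mxE. Qed.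

Lemma gram_formC : G^T = G -> forall u v, form u v = form v u.
Proof.
move=> G_sym u v; rewrite /gram_form.
transitivity ((v *m G *m u^T)^T 0 0); last by rewrite mxE.
by rewrite !trmx_mul trmxK G_sym mulmxA.
Qed.

End GramForm.

Definition gram_formE := (gram_formDl, gram_formNl, gram_formDr, gram_formNr).

Section OrderFiveIsometry.
Variables (n : nat) (G h : 'M[int]_n).
Hypotheses (G_sym : G^T = G)
  (h_iso : forall u v, gram_form G (u *m h) (v *m h) = gram_form G u v)
  (h5 : h ^+ 5 = 1) (h_fixfree : forall w : 'rV[int]_n, w *m h = w -> w = 0).
Local Notation form := (gram_form G).

Section Orbit.
Variable w : 'rV[int]_n.
Local Notation orbit k := (w *m h ^+ k).
Local Notation corr k := (form (orbit k) w).

Lemma orbitS k : orbit k.+1 = orbit k *m h.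
Proof. by rewrite exprSr -mulmxE mulmxA. Qed.

Lemma form_orbit_shift k j : form (orbit (k + j)) (orbit j) = corr k.
Proof.
elim: j => [|j IH]; first by rewrite addn0 expr0 mulmx1.
by rewrite addnS !orbitS h_iso.
Qed.

Lemma form_orbit i j :
  form (orbit i) (orbit j) = corr (if (j <= i)%N then i - j else j - i)%N.
Proof.
case: leqP => [ji | /ltnW ij]; first by rewrite -{1}(subnK ji) form_orbit_shift.
by rewrite gram_formC // -{1}(subnK ij) form_orbit_shift.
Qed.

Lemma corr_reflect k : (k <= 5)%N -> corr (5 - k) = corr k.
Proof.
move=> k5; transitivity (form (orbit (5 - k)) (orbit 5)).
  by rewrite h5 mulmx1.
rewrite form_orbit; case: ifP => [le5_5Bk | _]; last by rewrite subKn.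
by have -> : k = 0%N by lia.
Qed.

Lemma orbit_sum_eq0 : orbit 0 + orbit 1 + orbit 2 + orbit 3 + orbit 4 = 0.
Proof.
apply: h_fixfree; rewrite !mulmxDl -!orbitS h5 mulmx1.
by rewrite addrC !addrA.
Qed.

Lemma corr_sum : corr 0 + 2 * corr 1 + 2 * corr 2 = 0.
Proof.
have := congr1 (form^~ w) orbit_sum_eq0.
rewrite gram_form0l !gram_formDl (@corr_reflect 1 isT) (@corr_reflect 2 isT).
lia.
Qed.

Lemma norm_mulBh_sqr :
  form (w *m (h - 1) *m (h - 1)) (w *m (h - 1) *m (h - 1)) + 5 * form w w
  = 5 * form (w *m (h - 1)) (w *m (h - 1)).
Proof.
have hB1 : w *m (h - 1) = orbit 1 - orbit 0 by rewrite mulmxBr expr1 expr0.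
have hB2 : w *m (h - 1) *m (h - 1) = orbit 2 - orbit 1 - (orbit 1 - orbit 0).
  by rewrite hB1 mulmxBr mulmxBl -!orbitS (mulmx1 (_ - _)).
have corr0 : corr 0 = form w w by rewrite expr0 mulmx1.
rewrite hB2 hB1 !gram_formE !form_orbit /= !subnn !subn0 !subn1 /=.
have := corr_sum; lia.
Qed.

End Orbit.

Lemma norm_mulBh_neq2 :
  (forall v, v != 0 -> 2 <= form v v) ->
  forall u, form (u *m (h - 1)) (u *m (h - 1)) != 2.
Proof.
move=> norm_min u; apply/eqP => norm_v2; set v := u *m (h - 1) in norm_v2.
have v_neq0 : v != 0 by apply: contra_eqN norm_v2 => /eqP ->; rewrite gram_form0l.
have u_neq0 : u != 0 by apply: contraNneq v_neq0 => u0; rewrite /v u0 mul0mx.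
have := norm_mulBh_sqr u; rewrite -/v norm_v2 => key.
have vBh_eq0 : v *m (h - 1) = 0.
  apply/eqP; move: (norm_min _ u_neq0); apply: contraTT => /norm_min; rewrite -ltNge; lia.
move/eqP: v_neq0; apply; apply: h_fixfree.
by apply/eqP; rewrite -subr_eq0 -vBh_eq0 mulmxBr mulmx1.
Qed.

End OrderFiveIsometry.

Lemma fixed_rV_eq0 n (h : 'M[int]_n) :
  ~~ eigenvalue (map_mx (intr : int -> rat) h) 1 ->
  forall w : 'rV[int]_n, w *m h = w -> w = 0.
Proof.
move=> no_eig1 w wh; apply/eqP; apply: contraNT no_eig1 => w_neq0.
apply/eigenvalueP; exists (map_mx intr w); first by rewrite -map_mxM wh scale1r.
apply: contra w_neq0 => /eqP/matrixP w0; apply/eqP/matrixP => i j.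
by have := w0 i j; rewrite !mxE => /eqP; rewrite intr_eq0 => /eqP.
Qed.

Lemma E8_adjC i j : E8_adj i j = E8_adj j i.
Proof.
by case: i => [[|[|[|[|[|[|[|[|//]]]]]]]] ?]; case: j => [[|[|[|[|[|[|[|[|//]]]]]]]] ?].
Qed.

Lemma E8_gram_sym : E8_gram^T = E8_gram.
Proof. by apply/matrixP => i j; rewrite !mxE eq_sym E8_adjC. Qed.

Definition E8_quad (a0 a1 a2 a3 a4 a5 a6 a7 : int) : int :=
  2 * (a0 ^+ 2 + a1 ^+ 2 + a2 ^+ 2 + a3 ^+ 2 + a4 ^+ 2 + a5 ^+ 2 + a6 ^+ 2 + a7 ^+ 2)
  - 2 * (a0 * a1 + a1 * a2 + a2 * a3 + a3 * a4 + a4 * a5 + a5 * a6 + a4 * a7).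

Local Notation coord x k := (x 0 (@inord 7 k%N)).

Lemma E8_normE (x : 'rV[int]_8) : E8_norm x =
  E8_quad (coord x 0) (coord x 1) (coord x 2) (coord x 3)
          (coord x 4) (coord x 5) (coord x 6) (coord x 7).
Proof.
have inord_eqE m k : (m < 8)%N -> (k < 8)%N -> (inord m == inord k :> 'I_8) = (m == k).
  by move=> ? ?; rewrite -val_eqE /= !inordK.
rewrite /E8_norm /E8_form !mxE big_mknat !big_nat_recl // big_mkord big_ord0.
rewrite !mxE !big_mknat !big_nat_recl // !big_mkord !big_ord0.
rewrite !mxE /E8_adj !inord_eqE // !inordK //= /E8_quad.
ring.
Qed.

(* Completing squares along the Dynkin diagram, from the ends of its arms
   towards the branch node 4. *)
Lemma E8_quad_sos a0 a1 a2 a3 a4 a5 a6 a7 :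
  60 * E8_quad a0 a1 a2 a3 a4 a5 a6 a7 =
  30 * (2 * a0 - a1) ^+ 2 + 10 * (3 * a1 - 2 * a2) ^+ 2 + 5 * (4 * a2 - 3 * a3) ^+ 2
  + 3 * (5 * a3 - 4 * a4) ^+ 2 + 30 * (2 * a6 - a5) ^+ 2 + 10 * (3 * a5 - 2 * a4) ^+ 2
  + 30 * (2 * a7 - a4) ^+ 2 + 2 * a4 ^+ 2.
Proof. rewrite /E8_quad; ring. Qed.

Lemma E8_quad_lt2 a0 a1 a2 a3 a4 a5 a6 a7 :
  E8_quad a0 a1 a2 a3 a4 a5 a6 a7 < 2 ->
  a0 = 0 /\ a1 = 0 /\ a2 = 0 /\ a3 = 0 /\ a4 = 0 /\ a5 = 0 /\ a6 = 0 /\ a7 = 0.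
Proof.
move=> quad_lt2.
have term_ge0 (c y : int) : 0 <= c -> 0 <= c * y ^+ 2.
  by move=> c_ge0; rewrite mulr_ge0 ?sqr_ge0.
have term_eq0 (c y : int) : 0 < c -> (c * y ^+ 2 == 0) = (y == 0).
  by move=> c_gt0; rewrite mulf_eq0 sqrf_eq0 gt_eqF.
have quad_eq0 : E8_quad a0 a1 a2 a3 a4 a5 a6 a7 = 0.
  have : 0 <= 60 * E8_quad a0 a1 a2 a3 a4 a5 a6 a7.
    by rewrite E8_quad_sos !addr_ge0 ?term_ge0.
  have [k quad_even] : exists k, E8_quad a0 a1 a2 a3 a4 a5 a6 a7 = 2 * k.
    by rewrite /E8_quad -mulrBr; eexists.
  by rewrite quad_even in quad_lt2 *; lia.
have /eqP := congr1 (fun q => 60 * q) quad_eq0.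
rewrite E8_quad_sos mulr0 !paddr_eq0 ?addr_ge0 ?term_ge0 // !term_eq0 //.
lia.
Qed.

Lemma E8_norm_min (x : 'rV[int]_8) : x != 0 -> 2 <= E8_norm x.
Proof.
move=> x_neq0; rewrite E8_normE leNgt; apply: contra x_neq0.
case/E8_quad_lt2 => [x0 [x1 [x2 [x3 [x4 [x5 [x6 x7]]]]]]]; apply/eqP/matrixP => i j.
rewrite (ord1 i) !mxE -[j]inord_val.
by case: j => [[|[|[|[|[|[|[|[|//]]]]]]]] ?].
Qed.

Theorem lemmaC2 (h : 'M[int]_8) :
  E8_isometry h ->
  h ^+ 5 = 1 -> h != 1 ->
  ~~ eigenvalue (map_mx (intr : int -> rat) h) 1 ->
  rootless (image_hm1 h).
Proof.
(* [h != 1] already follows from the eigenvalue hypothesis. *)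
move=> h_iso h5 _ no_eig1 _ [u ->].
exact: norm_mulBh_neq2 E8_gram_sym h_iso h5 (fixed_rV_eq0 no_eig1) E8_norm_min u.
Qed.
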